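(* For every integer $n\ge 0$ and every real number $x$, \[ \sum_{l=0}^{n}\frac{\binom{n}{l}E_{n-l}(x)}{n+l+1}=\sum_{l=0}^{n}(-1)^l\,\frac{E_{n-l}(1+x)}{n+l+1}\,\frac{\binom{n}{l}}{\binom{n+l}{l}} . \] In particular, for $x=0$, \[ \sum_{l=0}^{n}\frac{\binom{n}{l}E_{n-l}}{n+l+1}=(-1)^n\sum_{l=0}^{n}\frac{E_{n-l}}{n+l+1}\,\frac{\binom{n}{l}}{\binom{n+l}{l}} . \]
   Context: The Euler polynomials $E_n(x)$ are defined by the generating function $\frac{2}{e^t+1}e^{xt}=\sum_{n\ge0}E_n(x)\frac{t^n}{n!}$, and the Euler numbers are $E_n=E_n(0)$, i.e. $\frac{2}{e^t+1}=\sum_{n\ge 0}E_n\frac{t^n}{n!}$. *)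

From HB Require Import structures.
From mathcomp Require Import all_boot all_order all_algebra.
Set Implicit Arguments. Unset Strict Implicit. Unset Printing Implicit Defensive.
Import Order.TTheory GRing.Theory Num.Theory.
Local Open Scope ring_scope.

(* Comparing coefficients of t^n/n! in
     (e^t + 1) * sum_n E_n(x) t^n/n! = 2 e^{xt}
   gives  sum_{k=0}^n C(n,k) E_k(x) + E_n(x) = 2 x^n,  i.e.
     E_n(x) = x^n - 1/2 * sum_{k<n} C(n,k) E_k(x).
   euler_seq x n is the list [E_0(x); ...; E_n(x)]. *)
Fixpoint euler_seq (R : realFieldType) (x : R) (n : nat) : seq R :=
  match n with
  | 0 => [:: 1]
  | n'.+1 =>
      let s := euler_seq x n' in
      rcons s (x ^+ n'.+1 - 2^-1 * \sum_(k < n'.+1) 'C(n'.+1, k)%:R * s`_k)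
  end.

Definition euler_poly (R : realFieldType) (n : nat) (x : R) : R :=
  (euler_seq x n)`_n.

Definition euler_num (R : realFieldType) (n : nat) : R := euler_poly n 0.

From HB Require Import structures.
From mathcomp Require Import all_boot all_order all_algebra.
From mathcomp Require Import ring lra zify.
Set Implicit Arguments. Unset Strict Implicit. Unset Printing Implicit Defensive.
Import Order.TTheory GRing.Theory Num.Theory.
Local Open Scope ring_scope.

(* Write  D_l := \int_0^1 t^(n+l) E_(n-l)(t + x) dt.
   - Expanding E_n(t + x) = \sum_l C(n,l) E_(n-l)(x) t^l (Appell property
     E_m' = m E_(m-1)) gives the left-hand side as D_0.
   - Integrating by parts,
       D_l = E_(n-l)(1+x)/(n+l+1) - (n-l)/(n+l+1) * D_(l+1),
     and iterating n+1 times (the coefficient vanishes at l = n) gives the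
     right-hand side, since \prod_(k<l) (n-k)/(n+k+1) = C(n,l)/C(n+l,l).
   - The case x = 0 follows from the reflection E_m(1-y) = (-1)^m E_m(y),
     itself a consequence of E_m(y+1) + E_m(y) = 2 y^m and of the fact that
     the only polynomial with p(y+1) + p(y) = 0 is p = 0.
   Integrals are formal: \int_0^1 p := \sum_i p_i / (i+1) on polynomials, for
   which linearity and the fundamental theorem of calculus are proved below.
   To differentiate, E_m is realised as a polynomial EP m by the same
   recursion as the definition euler_seq. *)

Section GrowingSequences.
Variables (T : Type) (x0 : T) (s : nat -> seq T).
Hypothesis size_s0 : size (s 0) = 1%N.
Hypothesis s_grows : forall n, exists y, s n.+1 = rcons (s n) y.

Lemma size_growing n : size (s n) = n.+1.
Proof. by elim: n => [|n IH] //; have [y ->] := s_grows n; rewrite size_rcons IH. Qed.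

Lemma nth_growing n k : (k <= n)%N -> nth x0 (s n) k = nth x0 (s k) k.
Proof.
elim: n => [|n IH]; first by rewrite leqn0 => /eqP ->.
rewrite leq_eqVlt => /orP[/eqP -> // | lt_kn].
by have [y ->] := s_grows n; rewrite nth_rcons size_growing lt_kn IH.
Qed.

Lemma last_growing n y : s n.+1 = rcons (s n) y -> nth x0 (s n.+1) n.+1 = y.
Proof. by move=> ->; rewrite nth_rcons size_growing ltnn eqxx. Qed.

End GrowingSequences.

Section FormalIntegral.
Variable K : numFieldType.

Definition integral01 (p : {poly K}) : K :=
  \sum_(0 <= i < size p) p`_i / i.+1%:R.

Lemma integral01_wide (p : {poly K}) N : (size p <= N)%N ->
  integral01 p = \sum_(0 <= i < N) p`_i / i.+1%:R.
Proof.
move=> le_pN; rewrite /integral01 (big_cat_nat (leq0n _) le_pN) /=.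
rewrite [X in _ = _ + X]big1_seq ?addr0 // => i /andP[_].
by rewrite mem_index_iota => /andP[le_pi _]; rewrite nth_default // mul0r.
Qed.

Lemma integral01B (p q : {poly K}) :
  integral01 (p - q) = integral01 p - integral01 q.
Proof.
set N := maxn (size p) (size q).
have le_pqN : (size (p - q)%R <= N)%N.
  by rewrite (leq_trans (size_polyD _ _)) // size_polyN.
rewrite (integral01_wide (leq_maxl (size p) (size q))).
rewrite (integral01_wide (leq_maxr (size p) (size q))).
rewrite (integral01_wide le_pqN) -sumrB.
by apply: eq_bigr => i _; rewrite coefB mulrBl.
Qed.

Lemma integral01Z c (p : {poly K}) : integral01 (c *: p) = c * integral01 p.
Proof.
rewrite (integral01_wide (size_scale_leq c p)) /integral01 mulr_sumr.
by apply: eq_bigr => i _; rewrite coefZ mulrA.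
Qed.

Lemma integral01_deriv (p : {poly K}) : integral01 p^`() = p.[1] - p.[0].
Proof.
have le_dp : (size p^`() <= (size p).-1)%N.
  apply/leq_sizeP => j le_j; rewrite coef_deriv nth_default ?mul0rn //.
  by move: le_j; case: (size p) => // k /=; lia.
rewrite (integral01_wide le_dp) horner_coef horner_coef0.
case sz_p: (size p) => [|n].
  by rewrite big_ord0 big_geq // nth_default ?sz_p // subrr.
rewrite big_ord_recl /= expr0 mulr1 [p`_0 + _]addrC addrK big_mkord.
apply: eq_bigr => i _; rewrite coef_deriv expr1n mulr1 /bump /= add1n.
by rewrite -[p`_ _ *+ _]mulr_natr mulfK // pnatr_eq0.
Qed.

Lemma integral01_XnM m (p : {poly K}) N : (size p <= N)%N ->
  integral01 ('X^m * p) = \sum_(0 <= j < N) p`_j / (m + j).+1%:R.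
Proof.
move=> le_pN.
have le_XpN : (size ('X^m * p)%R <= m + N)%N.
  apply/leq_sizeP => j le_j; rewrite coefXnM; case: ifP => // _.
  by rewrite nth_default //; apply: leq_trans le_pN _; lia.
rewrite (integral01_wide le_XpN) (big_cat_nat (leq0n m) (leq_addr _ _)) /=.
rewrite big1_seq ?add0r; last first.
  by move=> i /andP[_]; rewrite mem_index_iota => /andP[_ lt_im]; rewrite coefXnM lt_im mul0r.
rewrite -{1}[m]add0n big_addn addKn; apply: eq_bigr => j _.
by rewrite coefXnM ltnNge leq_addl /= addnK addnC.
Qed.

End FormalIntegral.

(* A polynomial p with p(y+1) + p(y) = 0 for all y is zero: p is then
   2-periodic, so p - p(0) has infinitely many roots 0, 2, 4, ... *)
Lemma antiperiodic_poly_eq0 (R : realFieldType) (p : {poly R}) :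
  (forall y, p.[y + 1] + p.[y] = 0) -> p = 0.
Proof.
move=> anti.
have periodic k : p.[k.*2%:R] = p.[0].
  elim: k => [|k IH] //.
  have -> : k.+1.*2%:R = k.*2%:R + 1 + 1 :> R by rewrite doubleS !mulrSr.
  by have := anti (k.*2%:R + 1); have := anti k.*2%:R; lra.
set q := p - p.[0]%:P.
have q_eq0 : q = 0.
  apply/eqP/negPn/negP => q_neq0.
  have := max_poly_roots q_neq0 (rs := [seq k.*2%:R | k <- iota 0 (size q)]).
  rewrite size_map size_iota ltnn => roots_bound; apply: notF; apply: roots_bound.
    apply/allP => z /mapP [k _ ->].
    by rewrite /root /q hornerD hornerN hornerC periodic subrr.
  rewrite map_inj_uniq ?iota_uniq // => a b /eqP.
  by rewrite eqr_nat => /eqP/double_inj.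
have p_const : p = p.[0]%:P by apply/eqP; rewrite -subr_eq0 -/q q_eq0.
have := anti 0; rewrite p_const !hornerC => anti0.
by have -> : p.[0] = 0 by lra.
Qed.

Section EulerPolynomials.
Variable R : realFieldType.

Lemma euler_poly_rec (x : R) n : euler_poly n x =
  x ^+ n - 2^-1 * \sum_(k < n) 'C(n, k)%:R * euler_poly k x.
Proof.
have size0 : size (euler_seq x 0) = 1%N by [].
have grows m : exists y, euler_seq x m.+1 = rcons (euler_seq x m) y by eexists.
case: n => [|n]; first by rewrite /euler_poly /= big_ord0 mulr0 subr0 expr0.
rewrite /euler_poly (last_growing 0 size0 grows (erefl _)).
congr (_ - _ * _); apply: eq_bigr => k _.
by rewrite (nth_growing _ size0 grows) // -ltnS.
Qed.

Fixpoint euler_polys (n : nat) : seq {poly R} :=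
  match n with
  | 0 => [:: 1]
  | m.+1 => let s := euler_polys m in
      rcons s ('X^(m.+1) - 2^-1 *: \sum_(k < m.+1) 'C(m.+1, k)%:R *: s`_k)
  end.

Definition EP (n : nat) : {poly R} := (euler_polys n)`_n.

Lemma EP_rec n : EP n = 'X^n - 2^-1 *: \sum_(k < n) 'C(n, k)%:R *: EP k.
Proof.
have size0 : size (euler_polys 0) = 1%N by [].
have grows m : exists y, euler_polys m.+1 = rcons (euler_polys m) y by eexists.
case: n => [|n]; first by rewrite /EP /= big_ord0 scaler0 subr0 expr0.
rewrite /EP (last_growing 0 size0 grows (erefl _)).
congr (_ - _ *: _); apply: eq_bigr => k _.
by rewrite (nth_growing _ size0 grows) // -ltnS.
Qed.

Lemma horner_EP n (y : R) : (EP n).[y] = euler_poly n y.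
Proof.
elim/ltn_ind: n => n IH.
rewrite EP_rec euler_poly_rec hornerD hornerN hornerZ hornerXn horner_sum.
by congr (_ - _ * _); apply: eq_bigr => k _; rewrite hornerZ IH.
Qed.

(* Appell property: E_n' = n E_(n-1), by strong induction on the recursion
   and k C(n,k) = n C(n-1,k-1). *)
Lemma deriv_EP n : (EP n)^`() = n%:R *: EP n.-1.
Proof.
elim/ltn_ind: n => n IH.
rewrite EP_rec derivB derivXn derivZ raddf_sum.
case: n IH => [|n] IH; first by rewrite big_ord0 scaler0 subr0 mulr0n scale0r.
rewrite big_ord_recl /= derivZ IH // !scale0r scaler0 add0r.
rewrite [EP n.+1.-1]EP_rec /= scalerBr -scaler_nat.
rewrite scalerA [_ * 2^-1]mulrC -scalerA.
congr (_ - _ *: _); rewrite scaler_sumr; apply: eq_bigr => i _.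
rewrite /bump /= add1n derivZ IH ?ltnS // !scalerA /=.
by congr (_ *: _); rewrite -natrM mulnC -mul_bin_diag natrM mulrC.
Qed.

Definition shifted_EP (x : R) (m : nat) : {poly R} := EP m \Po ('X + x%:P).

Lemma horner_shifted_EP x m t : (shifted_EP x m).[t] = euler_poly m (t + x).
Proof. by rewrite /shifted_EP horner_comp hornerD hornerX hornerC horner_EP. Qed.

Lemma deriv_shifted_EP x m : (shifted_EP x m)^`() = m%:R *: shifted_EP x m.-1.
Proof.
rewrite /shifted_EP deriv_comp deriv_EP derivD derivX derivC addr0 mulr1.
by rewrite comp_polyZ.
Qed.

Lemma coef_shifted_EP x n l :
  (shifted_EP x n)`_l = 'C(n, l)%:R * euler_poly (n - l) x.
Proof.
elim: n l => [|n IH] [|l];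
  try by rewrite -horner_coef0 horner_shifted_EP add0r bin0 mul1r ?subn0.
  have : ((shifted_EP x 0)^`())`_l = 0 by rewrite deriv_shifted_EP scale0r coef0.
  by rewrite coef_deriv => /eqP; rewrite mulrn_eq0 /= => /eqP ->; rewrite bin0n mul0r.
have : ((shifted_EP x n.+1)^`())`_l = (n.+1%:R *: shifted_EP x n)`_l.
  by rewrite deriv_shifted_EP.
rewrite coef_deriv coefZ IH subSS => /(congr1 (fun z => z / l.+1%:R)).
rewrite -[X in X / _ = _ -> _]mulr_natr mulfK ?pnatr_eq0 // => ->.
rewrite mulrA -natrM (mul_bin_diag n.+1 l) natrM /=.
by field; rewrite addrC natr1 pnatr_eq0.
Qed.

Lemma size_shifted_EP x n : (size (shifted_EP x n) <= n.+1)%N.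
Proof. by apply/leq_sizeP => j lt_nj; rewrite coef_shifted_EP bin_small ?mul0r. Qed.

Lemma euler_poly_add1 m (y : R) :
  euler_poly m (y + 1) = \sum_(k < m.+1) 'C(m, k)%:R * euler_poly k y.
Proof.
rewrite addrC -horner_shifted_EP (horner_coef_wide _ (size_shifted_EP y m)).
rewrite (reindex_inj rev_ord_inj) /=; apply: eq_bigr => l _.
have le_lm : (l <= m)%N by rewrite -ltnS.
by rewrite expr1n mulr1 coef_shifted_EP subSS subKn // bin_sub.
Qed.

Lemma euler_poly_shift m (y : R) : euler_poly m (y + 1) + euler_poly m y = 2 * y ^+ m.
Proof.
rewrite euler_poly_add1 big_ord_recr /= binn mul1r.
by rewrite [euler_poly m y]euler_poly_rec; field.
Qed.

(* Reflection symmetry E_m(1 - y) = (-1)^m E_m(y): the difference of both sides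
   satisfies p(y+1) + p(y) = 0 by the functional equation. *)
Lemma euler_poly_reflect m (y : R) : euler_poly m (1 - y) = (-1) ^+ m * euler_poly m y.
Proof.
set p : {poly R} := (-1) ^+ m *: EP m - (EP m \Po (1 - 'X)).
have horner_p z : p.[z] = (-1) ^+ m * euler_poly m z - euler_poly m (1 - z).
  by rewrite /p hornerD hornerN hornerZ horner_comp hornerD hornerN hornerX hornerC !horner_EP.
have p_eq0 : p = 0.
  apply: antiperiodic_poly_eq0 => z; rewrite !horner_p.
  have -> : 1 - (z + 1) = - z by ring.
  have -> : 1 - z = - z + 1 by ring.
  have := euler_poly_shift m z; have := euler_poly_shift m (- z).
  move=> shift_neg shift_pos; rewrite exprNn in shift_neg.
  transitivity ((-1) ^+ m * (euler_poly m (z + 1) + euler_poly m z)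
     - (euler_poly m (- z + 1) + euler_poly m (- z))); first ring.
  by rewrite shift_pos shift_neg; ring.
by have := horner_p y; rewrite p_eq0 horner0 => /eqP; rewrite eq_sym subr_eq0 => /eqP.
Qed.

Definition euler_moment (x : R) (n l : nat) : R :=
  integral01 ('X^(n + l) * shifted_EP x (n - l)).

Lemma euler_moment0 x n : euler_moment x n 0 =
  \sum_(l < n.+1) 'C(n, l)%:R * euler_poly (n - l) x / (n + l + 1)%:R.
Proof.
rewrite /euler_moment addn0 subn0 (integral01_XnM _ (size_shifted_EP x n)) big_mkord.
by apply: eq_bigr => l _; rewrite coef_shifted_EP addn1.
Qed.

(* Integration by parts against t^(n+l) = (t^(n+l+1) / (n+l+1))'. *)
Lemma euler_moment_step x n l : euler_moment x n l =
  euler_poly (n - l) (1 + x) / (n + l + 1)%:R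
  - (n - l)%:R / (n + l + 1)%:R * euler_moment x n l.+1.
Proof.
rewrite {1}/euler_moment.
set c : R := ((n + l).+1%:R)^-1.
set g : {poly R} := c *: 'X^((n + l).+1).
have deriv_g : g^`() = 'X^(n + l).
  rewrite /g derivZ derivXn /= -scaler_nat scalerA mulrC.
  by rewrite /c mulfV ?pnatr_eq0 // scale1r.
have -> : 'X^(n + l) * shifted_EP x (n - l) =
    (shifted_EP x (n - l) * g)^`() - (shifted_EP x (n - l))^`() * g.
  by rewrite derivM deriv_g addrC addKr mulrC.
rewrite integral01B integral01_deriv !hornerM horner_shifted_EP /g !hornerZ !hornerXn.
rewrite expr0n /= mulr0 mulr0 subr0 expr1n mulr1 deriv_shifted_EP -subnS.
rewrite -scalerAl -scalerAr !integral01Z mulrA.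
by rewrite /euler_moment addn1 addnS [shifted_EP x _ * _]mulrC.
Qed.

Definition moment_weight (n l : nat) : R := 'C(n, l)%:R / 'C(n + l, l)%:R.

Lemma moment_weightS n k :
  moment_weight n k.+1 = moment_weight n k * ((n - k)%:R / (n + k + 1)%:R).
Proof.
rewrite /moment_weight.
have binS : (k.+1 * 'C(n, k.+1) = (n - k) * 'C(n, k))%N by rewrite mul_bin_left.
have bin_addS : ((n + k + 1) * 'C(n + k, k) = k.+1 * 'C(n + k.+1, k.+1))%N.
  by rewrite addn1 -(mul_bin_diag (n + k.+1) k) addnS.
have nz_bin : 'C(n + k, k)%:R != 0 :> R by rewrite pnatr_eq0 -lt0n bin_gt0 leq_addl.
have nz_k : k.+1%:R != 0 :> R by rewrite pnatr_eq0.
have -> : 'C(n, k.+1)%:R = (n - k)%:R * 'C(n, k)%:R / k.+1%:R :> R.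
  by rewrite -natrM -binS natrM mulrC mulKf.
have -> : 'C(n + k.+1, k.+1)%:R = (n + k + 1)%:R * 'C(n + k, k)%:R / k.+1%:R :> R.
  by rewrite -natrM bin_addS natrM mulrC mulKf.
by field; rewrite nz_bin -natrD natr1 pnatr_eq0 /= addrC natr1 pnatr_eq0.
Qed.

Lemma euler_moment_iter x n k : euler_moment x n 0 =
  \sum_(l < k) (-1) ^+ l * (euler_poly (n - l) (1 + x) / (n + l + 1)%:R)
                 * moment_weight n l
  + (-1) ^+ k * moment_weight n k * euler_moment x n k.
Proof.
elim: k => [|k IH].
  by rewrite big_ord0 add0r expr0 mul1r /moment_weight addn0 !bin0 divr1 mul1r.
rewrite IH big_ord_recr /= -addrA; congr (_ + _).
by rewrite euler_moment_step moment_weightS exprS; ring.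
Qed.

(* The identity for arbitrary x: after n+1 steps the remainder has weight 0. *)
Lemma euler_identity n (x : R) :
  \sum_(l < n.+1) 'C(n, l)%:R * euler_poly (n - l) x / (n + l + 1)%:R
  = \sum_(l < n.+1) (-1) ^+ l * (euler_poly (n - l) (1 + x) / (n + l + 1)%:R)
                    * ('C(n, l)%:R / 'C(n + l, l)%:R).
Proof.
rewrite -euler_moment0 (euler_moment_iter x n n.+1).
by rewrite {2}/moment_weight bin_small // mul0r mulr0 mul0r addr0.
Qed.

End EulerPolynomials.

Theorem theorem1 (R : realFieldType) :
  (forall (n : nat) (x : R),
    \sum_(l < n.+1) 'C(n, l)%:R * euler_poly (n - l) x / (n + l + 1)%:R
    = \sum_(l < n.+1) (-1) ^+ l * (euler_poly (n - l) (1 + x) / (n + l + 1)%:R)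
                      * ('C(n, l)%:R / 'C(n + l, l)%:R))
  /\
  (forall n : nat,
    \sum_(l < n.+1) 'C(n, l)%:R * euler_num R (n - l) / (n + l + 1)%:R
    = (-1) ^+ n * \sum_(l < n.+1) (euler_num R (n - l) / (n + l + 1)%:R)
                      * ('C(n, l)%:R / 'C(n + l, l)%:R)).
Proof.
split; first exact: euler_identity.
move=> n; rewrite /euler_num euler_identity mulr_sumr; apply: eq_bigr => l _.
(* E_(n-l)(1) = (-1)^(n-l) E_(n-l)(0), and (-1)^l (-1)^(n-l) = (-1)^n. *)
have reflect1 := euler_poly_reflect (n - l) (0 : R).
rewrite subr0 in reflect1; rewrite addr0 reflect1 !mulrA -exprD subnKC //.
by rewrite -ltnS.
Qed.
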